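(* Let $K$ be a set of $n$ distinct keys from a totally ordered set, and let $L'$ be a uniformly random ordering of $K$, written $L' = a :: L$ (so $a$ is the first key of $L'$ and $L$ is the list of the remaining $n-1$ keys). Run memoized Quicksort (as defined in the context) first on $L$ and then on $L'$, with the memo tables (for Quicksort and for hash-consing) shared between the two runs. Then the expected running time of the second run, on $L'$, is $O(n)$. The expectation is over the uniformly random ordering of the input and over the internal randomization of the hash functions used to implement the memo tables.
   Context: Quicksort on a list $\ell$ of distinct keys: if $\ell$ is empty, return the empty list; otherwise $\ell = h :: t$, the pivot is $h$, one computes $s = $ the sublist of $t$ of keys $< h$ and $g = $ the sublist of $t$ of keys $\geq h$ (both by filtering $t$, which preserves the relative order of keys and takes time linear in the length of $t$), recursively sorts $s$ and $g$, and returns $\mathrm{sort}(s) \mathbin{@} (h :: \mathrm{sort}(g))$. Memoized Quicksort is the same algorithm in which (i) the lists produced by filtering are built with hash-consing, so that structurally equal lists are represented by the same object and can be compared and hashed in expected $O(1)$ time, each hash-consing step costing expected $O(1)$ time; and (ii) every recursive call first looks up its argument list in a memo table (keyed by the argument list, lookup and update costing expected $O(1)$ time); if a result for an equal list is stored there, that result is returned immediately, otherwise the call is executed and its result is stored. Running time counts elementary operations, with each memo-table operation and each hash-consing operation costing expected constant time. *)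

From mathcomp Require Import all_boot all_order.
Set Implicit Arguments. Unset Strict Implicit. Unset Printing Implicit Defensive.
Import Order.TTheory.
Local Open Scope order_scope.

Section MemoQuicksort.
Variables (d : Order.disp_t) (T : orderType d).

(* The Quicksort memo table: a list of (argument, result) pairs.
   Lists are hash-consed, so comparing/looking them up is a unit-cost
   operation in the cost model below. *)
Definition memo := seq (seq T * seq T).

Definition memo_lookup (M : memo) (l : seq T) : option (seq T) :=
  ohead [seq p.2 | p <- M & p.1 == l].

(* Cost model (elementary operations, each memo/hash-consing op = 1):
   - 1 for the memo lookup; on a hit, nothing else;
   - on a miss with l = [::]: 1 more for storing the result;
   - on a miss with l = h :: t: size t for traversing t while filtering,
     size s + size g hash-consing steps for building s and g,
     the costs of the two recursive calls (s first, then g, memo threaded),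
     size (sort s) for the append, 1 for the cons h :: _, 1 for the store.
   The fuel is only a termination device; [mqs_run] supplies enough fuel. *)
Fixpoint mqs (fuel : nat) (M : memo) (l : seq T) : seq T * memo * nat :=
  match fuel with
  | 0 => (l, M, 0)
  | f.+1 =>
    match memo_lookup M l with
    | Some r => (r, M, 1)
    | None =>
      match l with
      | [::] => ([::], (l, [::]) :: M, 2)
      | h :: t =>
        let s := [seq x <- t | x < h] in
        let g := [seq x <- t | h <= x] in
        let '(rs, M1, c1) := mqs f M s in
        let '(rg, M2, c2) := mqs f M1 g in
        let r := rs ++ h :: rg in
        (r, (l, r) :: M2,
         1 + (size t + (size s + size g)) + c1 + c2 + size rs + 1 + 1)%N
      end
    end
  end.

Definition mqs_run (M : memo) (l : seq T) := mqs (size l).+1 M l.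

Definition second_run_cost (L' : seq T) : nat :=
  match L' with
  | [::] => 0
  | a :: L => let '(_, M1, _) := mqs_run [::] L in (mqs_run M1 (a :: L)).2
  end.

End MemoQuicksort.

(* Section FirstHits: a key [h] "leads" a window [W] of an ordering when it is
   the first key of the ordering in [W]; [window_cost] charges pivots through
   such events.  A symmetry argument (swapping two keys of a window) shows
   that the keys of a window lead it equally often among the orderings with a
   given first key (starts_led_sym), so the average charge is linear
   (average_window_cost).
   Section QuicksortWindows: in the second run, a call on the keys of a stored
   list below (resp. above) [a] with pivot [h] is fresh only when [h] leads the
   keys between [h] and [a]; this bounds its cost by [below_cost]
   (resp. [above_cost]), instances of [window_cost] (below_fresh_cost,
   above_fresh_cost). *)

From mathcomp Require Import all_boot all_order zify.
Set Implicit Arguments. Unset Strict Implicit. Unset Printing Implicit Defensive.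
Import Order.TTheory.

Local Notation lesser h t := [seq x <- t | (x < h)%O].
Local Notation greater h t := [seq x <- t | (h <= x)%O].

Section SequenceBookkeeping.
Variable A : Type.
Implicit Types (s t : seq A) (P Q : pred A) (F G : A -> nat).

Lemma sum_nat_bool P s : \sum_(x <- s) P x = count P s.
Proof. by rewrite -sumn_count sumnE big_map. Qed.

Lemma sum_nat_const_seq (c : nat) s : \sum_(x <- s) c = size s * c.
Proof. by rewrite big_const_seq count_predT iter_addn_0 mulnC. Qed.

Lemma leq_sum_cond P F s : \sum_(x <- s | P x) F x <= \sum_(x <- s) F x.
Proof. by rewrite big_mkcond; apply: leq_sum => x _; case: (P x). Qed.

Lemma leq_sum_cons Q G (h : A) t :
  \sum_(x <- t | Q x) G x <= \sum_(x <- h :: t | Q x) G x.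
Proof. by rewrite big_cons; case: ifP => // _; apply: leq_addl. Qed.

Lemma filter_swap P Q s : filter P (filter Q s) = filter Q (filter P s).
Proof. by rewrite -!filter_predI; apply: eq_filter => x /=; rewrite andbC. Qed.

End SequenceBookkeeping.

Section MemoRuns.
Variables (d : Order.disp_t) (T : orderType d).
Implicit Types (M : memo T) (l t : seq T) (h : T).

Definition memo_keys M : seq (seq T) := [seq p.1 | p <- M].

Definition size_preserving M : bool := all (fun p => size p.2 == size p.1) M.

Definition split_closed M : Prop :=
  forall h t, h :: t \in memo_keys M ->
    lesser h t \in memo_keys M /\ greater h t \in memo_keys M.

Lemma size_split h t : size (lesser h t) + size (greater h t) = size t.
Proof.
rewrite !size_filter -(count_predC (fun x => (x < h)%O) t); congr (_ + _).
by apply: eq_count => x /=; rewrite -leNgt.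
Qed.

Lemma memo_lookup_cons p M l :
  memo_lookup (p :: M) l = if p.1 == l then Some p.2 else memo_lookup M l.
Proof. by rewrite /memo_lookup /=; case: (p.1 == l). Qed.

Lemma memo_keysE M l : (l \in memo_keys M) = (memo_lookup M l != None).
Proof.
elim: M => [|p M IH] //; rewrite memo_lookup_cons /= inE.
by case: (l =P p.1) => [->|/eqP/negbTE ne]; rewrite ?eqxx // [p.1 == l]eq_sym ne.
Qed.

Lemma memo_lookup_size M l r :
  size_preserving M -> memo_lookup M l = Some r -> size r = size l.
Proof.
elim: M => [|p M IH] //; rewrite memo_lookup_cons /= => /andP [/eqP szp szM].
by case: eqP => [<- [<-] //|_]; apply: IH.
Qed.

Lemma mqs_invariant f M l : size_preserving M ->
  let: (r, M', _) := mqs f M l in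
  [/\ size_preserving M', size r = size l & {subset memo_keys M <= memo_keys M'}].
Proof.
elim: f M l => [|f IH] M l szM /=; first by split.
case E: (memo_lookup M l) => [r|]; first by split => //; apply: memo_lookup_size E.
case: l E => [|h t] _ /=; first by split => // k kM; rewrite inE kM orbT.
case E1: (mqs f M _) => [[rs M1] c1].
have := IH M (lesser h t) szM; rewrite E1 => -[szM1 szs sub1].
case E2: (mqs f M1 _) => [[rg M2] c2].
have := IH M1 (greater h t) szM1; rewrite E2 => -[szM2 szg sub2].
have szr : size (rs ++ h :: rg) = (size t).+1.
  by rewrite size_cat /= szs szg addnS size_split.
split=> //; first by rewrite /= szr eqxx.
by move=> k kM; rewrite inE (sub2 _ (sub1 _ kM)) orbT.
Qed.

Lemma split_closed_cons M l r : split_closed M ->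
  (forall h t, l = h :: t -> lesser h t \in memo_keys M /\ greater h t \in memo_keys M) ->
  split_closed ((l, r) :: M).
Proof.
move=> cM cl h t; rewrite inE => /orP [/eqP E|/cM [Hs Hg]].
  by have [Hs Hg] := cl h t (esym E); rewrite !inE Hs Hg !orbT.
by rewrite !inE Hs Hg !orbT.
Qed.

Lemma mqs_split_closed f M l : size_preserving M -> split_closed M -> size l < f ->
  let: (_, M', _) := mqs f M l in split_closed M' /\ l \in memo_keys M'.
Proof.
elim: f M l => [|f IH] M l szM cM //= lf.
case E: (memo_lookup M l) => [r|]; first by split => //; rewrite memo_keysE E.
case: l E lf => [|h t] _ /= lf.
  by split; [apply: split_closed_cons => // ? ? | rewrite inE eqxx].
have lft : size t < f := lf.
have lfs : size (lesser h t) < f by rewrite (leq_ltn_trans _ lft) // size_filter count_size.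
have lfg : size (greater h t) < f by rewrite (leq_ltn_trans _ lft) // size_filter count_size.
case E1: (mqs f M _) => [[rs M1] c1].
have := mqs_invariant f (lesser h t) szM; rewrite E1 => -[szM1 _ _].
have := IH M (lesser h t) szM cM lfs; rewrite E1 => -[cM1 inM1].
case E2: (mqs f M1 _) => [[rg M2] c2].
have := mqs_invariant f (greater h t) szM1; rewrite E2 => -[_ _ sub2].
have := IH M1 (greater h t) szM1 cM1 lfg; rewrite E2 => -[cM2 inM2].
split; last by rewrite inE eqxx.
by apply: split_closed_cons => // _ _ [<- <-]; rewrite inM2 (sub2 _ inM1).
Qed.

(* [fresh_cost M1 f l] bounds the cost of a run on [l] against any table that
   already contains the arguments stored in [M1]: a stored argument costs one
   lookup, a fresh one at most [4 * size l] plus the costs of its two halves. *)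
Fixpoint fresh_cost M1 f l : nat :=
  match f with
  | 0 => 0
  | f.+1 =>
    if l \in memo_keys M1 then 1 else
    match l with
    | [::] => 2
    | h :: t => 4 * size l + fresh_cost M1 f (lesser h t) + fresh_cost M1 f (greater h t)
    end
  end.

Lemma fresh_cost_nil M1 f : fresh_cost M1 f [::] <= 2.
Proof. by case: f => //= f; case: ifP. Qed.

Lemma fresh_cost_key M1 f l : l \in memo_keys M1 -> fresh_cost M1 f.+1 l = 1.
Proof. by move=> /= ->. Qed.

Lemma fresh_cost_cons M1 f h t : fresh_cost M1 f.+1 (h :: t) <=
  4 * (size t).+1 + fresh_cost M1 f (lesser h t) + fresh_cost M1 f (greater h t).
Proof. by rewrite /=; case: ifP => // _; lia. Qed.

Lemma mqs_cost_le M1 f M l : size_preserving M -> {subset memo_keys M1 <= memo_keys M} ->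
  (mqs f M l).2 <= fresh_cost M1 f l.
Proof.
elim: f M l => [|f IH] M l szM sub //=.
case E: (memo_lookup M l) => [r|] /=.
  by case: ifP => // _; case: l {E} => // h t; lia.
have -> : (l \in memo_keys M1) = false.
  by apply: contraFF (sub l) _; rewrite memo_keysE E.
case: l {E} => [|h t] //=.
case E1: (mqs f M _) => [[rs M1'] c1].
have := mqs_invariant f (lesser h t) szM; rewrite E1 => -[szM1 szs sub1].
have := IH M (lesser h t) szM sub; rewrite E1 /= => c1_le.
case E2: (mqs f M1' _) => [[rg M2] c2] /=.
have := IH M1' (greater h t) szM1 (fun k kM => sub1 _ (sub k kM)); rewrite E2 /= => c2_le.
have rs_le : size rs <= size t by rewrite szs size_filter count_size.
rewrite size_split; lia.
Qed.


End MemoRuns.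

Section FirstHits.
Variable T : eqType.
Implicit Types (s r t K : seq T) (W : pred T) (h x y : T).

Definition leads s W y : bool := ohead (filter W s) == Some y.

Lemma leads_cons_out h s W y : ~~ W h -> leads (h :: s) W y = leads s W y.
Proof. by rewrite /leads /= => /negbTE ->. Qed.

Lemma leads_cons_in h s W : W h -> leads (h :: s) W h.
Proof. by rewrite /leads /= => ->. Qed.

Lemma leads_filter (P : pred T) s W y : {subset W <= P} -> leads (filter P s) W y = leads s W y.
Proof.
move=> WP; have WPW : predI W P =1 W.
  by move=> z /=; case Wz: (W z) => //=; apply: WP.
by rewrite /leads -filter_predI (eq_filter WPW).
Qed.

Lemma sum_head_le1 (o : option T) K : uniq K -> \sum_(h <- K) (o == Some h) <= 1.
Proof.
move=> uK; case: o => [z|]; last by rewrite big1.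
under eq_bigr => h _ do rewrite (inj_eq Some_inj).
rewrite (sum_nat_bool (fun h => z == h)) (eq_count (a2 := pred1 z)); last first.
  by move=> h /=; rewrite eq_sym.
by rewrite count_uniq_mem // leq_b1.
Qed.

Lemma leq_sum_filter (P Q : pred T) (F G : T -> nat) t :
  (forall x, x \in t -> P x -> Q x -> F x <= G x) ->
  \sum_(x <- filter P t | Q x) F x <= \sum_(x <- t | Q x) G x.
Proof.
move=> FG; rewrite big_filter_cond big_mkcond [leqRHS]big_mkcond.
rewrite big_seq [leqRHS]big_seq; apply: leq_sum => x xt.
by case Px: (P x); case Qx: (Q x) => //=; apply: FG.
Qed.

(* Charging scheme for the fresh calls of a Quicksort run on [s], restricted to
   the keys satisfying [B]: the call with pivot [h] is fresh when [h] leads the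
   window [W h h], and a key [x] takes part in it when [h] leads [W h x]; such
   a call is charged one plus four per participating key. *)
Definition pivot_cost (B : pred T) (W : T -> T -> pred T) r s h : nat :=
  leads s (W h h) h + 4 * \sum_(x <- r | B x) leads s (W h x) h.

Definition window_cost (B : pred T) (W : T -> T -> pred T) r s : nat :=
  \sum_(h <- r | B h) pivot_cost B W r s h.

Section Windows.
Variables (B : pred T) (W : T -> T -> pred T).

Lemma window_cost_cons h t : window_cost B W (h :: t) (h :: t) =
  (if B h then pivot_cost B W (h :: t) (h :: t) h else 0) +
  \sum_(h' <- t | B h') pivot_cost B W (h :: t) (h :: t) h'.
Proof. by rewrite /window_cost big_cons; case: ifP. Qed.

Lemma pivot_cost_head h t : W h h h -> (forall x, B x -> W h x h) ->
  pivot_cost B W (h :: t) (h :: t) h = 1 + 4 * count B (h :: t).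
Proof.
move=> Whh Wxh; rewrite /pivot_cost leads_cons_in // -sum1_count.
by congr (_ + 4 * _); apply: eq_bigr => x Bx; rewrite leads_cons_in ?Wxh.
Qed.

Lemma window_cost_filter (P : pred T) h t :
  (forall h' x, h' \in t -> x \in t -> P h' -> B h' -> P x ->
     leads (filter P t) (W h' x) h' = leads (h :: t) (W h' x) h') ->
  window_cost B W (filter P t) (filter P t) <=
  \sum_(h' <- t | B h') pivot_cost B W (h :: t) (h :: t) h'.
Proof.
move=> same; apply: leq_sum_filter => h' h't Ph' Bh'.
rewrite /pivot_cost same // leq_add2l leq_mul2l; apply/orP; right.
apply: leq_trans (leq_sum_cons _ _ h _); apply: leq_sum_filter => x xt Px Bx.
by rewrite same.
Qed.

Lemma window_cost_perm r r' s : perm_eq r r' -> window_cost B W r s = window_cost B W r' s.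
Proof.
move=> p; rewrite /window_cost (perm_big _ p); apply: eq_bigr => h _.
by rewrite /pivot_cost (perm_big _ p).
Qed.

Lemma window_cost_cons_index a r s : B a = false ->
  window_cost B W (a :: r) s = window_cost B W r s.
Proof.
move=> Ba; rewrite /window_cost big_cons Ba; apply: eq_bigr => h _.
by rewrite /pivot_cost big_cons Ba.
Qed.

Lemma window_cost_cons_outside a r s : (forall h x, ~~ W h x a) ->
  window_cost B W r (a :: s) = window_cost B W r s.
Proof.
move=> Wa; rewrite /window_cost; apply: eq_bigr => h _.
rewrite /pivot_cost leads_cons_out //; congr (_ + 4 * _).
by apply: eq_bigr => x _; rewrite leads_cons_out.
Qed.

End Windows.

Definition swap h h' y : T := if y == h then h' else if y == h' then h else y.

Lemma swapK h h' : involutive (swap h h').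
Proof.
move=> y; rewrite /swap; case: (y =P h) => [->|yh].
  by rewrite eqxx; case: (h' =P h) => // ->.
case: (y =P h') => [->|yh']; first by rewrite eqxx.
by do 2 (case: eqP => // ?).
Qed.

Section Averaging.
Variable K : seq T.
Hypothesis uniqK : uniq K.

Definition starts_with a : nat := \sum_(L <- permutations K) (ohead L == Some a).

Definition starts_led a W h : nat :=
  \sum_(L <- permutations K) ((ohead L == Some a) && leads L W h).

Lemma sum_starts_with : \sum_(a <- K) starts_with a <= size (permutations K).
Proof.
rewrite /starts_with exchange_big -sum1_size; apply: leq_sum => L _.
exact: sum_head_le1.
Qed.

Lemma starts_led_le a W h : starts_led a W h <= starts_with a.
Proof. by apply: leq_sum => L _; case: (ohead L == Some a); rewrite ?leq_b1. Qed.

Lemma sum_starts_led a W : \sum_(h <- K) starts_led a W h <= starts_with a.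
Proof.
rewrite /starts_led exchange_big; apply: leq_sum => L _.
case: (ohead L == Some a) => /=; last by rewrite big1.
exact: sum_head_le1.
Qed.

Lemma eq_starts_led a W W' h : W =1 W' -> starts_led a W h = starts_led a W' h.
Proof. by move=> E; apply: eq_bigr => L _; rewrite /leads (eq_filter E). Qed.

Lemma sum_permutations_relabel (sigma : T -> T) (F : seq T -> nat) :
  involutive sigma -> perm_eq (map sigma K) K ->
  \sum_(L <- permutations K) F L = \sum_(L <- permutations K) F (map sigma L).
Proof.
move=> sigmaK pK; rewrite -(big_map (map sigma) xpredT F); apply: perm_big.
have inj : injective (map sigma) by apply: can_inj (mapK sigmaK).
apply: uniq_perm; rewrite ?(map_inj_uniq inj) ?permutations_uniq // => L.
rewrite -{2}(mapK sigmaK L) (mem_map inj) !mem_permutations.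
apply/idP/idP => [pL|pL]; first exact: perm_trans (perm_map sigma pL) pK.
by apply: (perm_map_inj (can_inj sigmaK)); apply: perm_trans pL _; rewrite perm_sym.
Qed.

Lemma swap_perm h h' : h \in K -> h' \in K -> perm_eq (map (swap h h') K) K.
Proof.
move=> hK h'K; apply: uniq_perm => //; first by rewrite (map_inj_uniq (can_inj (swapK h h'))).
move=> y; rewrite -{1}(swapK h h' y) (mem_map (can_inj (swapK h h'))) /swap.
case: (y =P h) => [->|]; first by rewrite hK h'K.
by case: (y =P h') => [->|]; [rewrite hK h'K|].
Qed.

Lemma starts_led_sym a W h h' : h \in K -> h' \in K -> W h -> W h' -> ~~ W a ->
  starts_led a W h = starts_led a W h'.
Proof.
move=> hK h'K Wh Wh' Wa.
rewrite /starts_led (sum_permutations_relabel _ (swapK h h') (swap_perm hK h'K)).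
apply: eq_bigr => L _; set sigma := swap h h'.
have sigma_a : sigma a = a.
  rewrite /sigma /swap; case: (a =P h) => [E|]; first by rewrite E Wh in Wa.
  by case: (a =P h') => [E|] //; rewrite E Wh' in Wa.
have Wsigma : filter W (map sigma L) = map sigma (filter W L).
  rewrite filter_map; congr map; apply: eq_filter => y /=; rewrite /sigma /swap.
  by case: ifP => [/eqP ->|_]; [|case: ifP => [/eqP ->|]]; rewrite ?Wh ?Wh'.
have ohead_map s : ohead (map sigma s) = omap sigma (ohead s) by case: s.
have omap_sigma o b : (omap sigma o == Some b) = (o == Some (sigma b)).
  case: o => [x|] //=; rewrite -[x in RHS](swapK h h') !(inj_eq Some_inj).
  by rewrite (inj_eq (can_inj (swapK h h'))).
rewrite /leads Wsigma !ohead_map !omap_sigma sigma_a.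
by rewrite /sigma /swap eqxx.
Qed.

Lemma count_mul_starts_led a W h : h \in K -> W h -> ~~ W a ->
  count W K * starts_led a W h <= starts_with a.
Proof.
move=> hK Wh Wa.
apply: leq_trans (leq_trans (leq_sum_cond W (starts_led a W) K) (sum_starts_led a W)).
rewrite -sum1_count big_distrl /= big_seq_cond [leqRHS]big_seq_cond.
apply: leq_sum => h' /andP [h'K Wh'].
by rewrite mul1n (starts_led_sym hK h'K).
Qed.

Lemma sum_head_window_cost a (B : pred T) (W : T -> T -> pred T) :
  \sum_(L <- permutations K) (ohead L == Some a) * window_cost B W K L =
  \sum_(h <- K | B h)
     (starts_led a (W h h) h + 4 * \sum_(x <- K | B x) starts_led a (W h x) h).
Proof.
rewrite /window_cost /pivot_cost.
under eq_bigr => L _ do rewrite big_distrr /=.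
rewrite exchange_big; apply: eq_bigr => h Bh.
under eq_bigr => L _ do rewrite mulnDr mulnCA big_distrr /=.
rewrite big_split /= -big_distrr /=; congr (_ + 4 * _).
  by apply: eq_bigr => L _; rewrite mulnb.
by rewrite exchange_big; apply: eq_bigr => x _; apply: eq_bigr => L _; rewrite mulnb.
Qed.

Lemma sum_starts_led_pivot a (B : pred T) (W : T -> T -> pred T) (Wx : T -> pred T) h :
  h \in K -> W h h h -> ~~ W h h a ->
  (forall x, B x -> (W h h x /\ W h x =1 W h h) \/ W h x =1 Wx x) ->
  \sum_(x <- K | B x) starts_led a (W h x) h <=
  starts_with a + \sum_(x <- K) starts_led a (Wx x) h.
Proof.
move=> hK Whh Wha split_x.
apply: (@leq_trans
  (\sum_(x <- K | B x) (W h h x * starts_led a (W h h) h + starts_led a (Wx x) h))).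
  apply: leq_sum => x Bx; case: (split_x x Bx) => [[Whx E]|E]; rewrite (eq_starts_led _ _ E).
    by rewrite Whx mul1n leq_addr.
  exact: leq_addl.
rewrite big_split /=; apply: leq_add; last exact: leq_sum_cond.
apply: leq_trans (leq_sum_cond _ _ _) _.
by rewrite -big_distrl /= sum_nat_bool; apply: count_mul_starts_led.
Qed.

Lemma average_window_cost a (B : pred T) (W : T -> T -> pred T) (Wx : T -> pred T) :
  (forall h, ~~ W h h a) -> (forall h, B h -> W h h h) ->
  (forall h x, B x -> (W h h x /\ W h x =1 W h h) \/ W h x =1 Wx x) ->
  \sum_(L <- permutations K) (ohead L == Some a) * window_cost B W K L <=
  9 * size K * starts_with a.
Proof.
move=> Wa Whh split_x; rewrite sum_head_window_cost.
apply: (@leq_trans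
  (\sum_(h <- K) (5 * starts_with a + 4 * \sum_(x <- K) starts_led a (Wx x) h))).
  apply: leq_trans (leq_sum_cond B _ _); rewrite big_seq_cond [leqRHS]big_seq_cond.
  apply: leq_sum => h /andP [hK Bh].
  have := sum_starts_led_pivot hK (Whh h Bh) (Wa h) (split_x h).
  have := starts_led_le a (W h h) h; lia.
have sum_Wx : \sum_(x <- K) \sum_(h <- K) starts_led a (Wx x) h <= size K * starts_with a.
  by rewrite -sum_nat_const_seq; apply: leq_sum => x _; apply: sum_starts_led.
rewrite big_split /= sum_nat_const_seq -big_distrr /= exchange_big.
apply: leq_trans (leq_add (leqnn _) (leq_mul (leqnn 4) sum_Wx)) _; lia.
Qed.

End Averaging.
End FirstHits.

Section QuicksortWindows.
Variables (d : Order.disp_t) (T : orderType d).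
Implicit Types (M : memo T) (l t : seq T) (a h x y : T).

(* Windows led by the pivot of a fresh call below, resp. above, the key [a]:
   the call with pivot [h < a] on the keys below [a] is fresh when [h] comes
   first among the keys of [[h, a)], and it contains [x] when [h] comes first
   among the keys of [[min x h, a)]; symmetrically above [a]. *)
Definition below_window a h x y : bool := (Order.min x h <= y)%O && (y < a)%O.
Definition above_window a h x y : bool := (a < y)%O && (y <= Order.max x h)%O.

Definition below_cost a (r s : seq T) : nat :=
  window_cost (fun x => (x < a)%O) (below_window a) r s.
Definition above_cost a (r s : seq T) : nat :=
  window_cost (fun x => (a < x)%O) (above_window a) r s.

Lemma filter_lesser_sub (P : pred T) h t : (forall x, P x -> (x < h)%O) ->
  filter P (lesser h t) = filter P t.
Proof.
by move=> Ph; rewrite -filter_predI; apply: eq_filter => x /=; case Px: (P x) => //=; apply: Ph.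
Qed.

Lemma filter_greater_sub (P : pred T) h t : (forall x, P x -> (h <= x)%O) ->
  filter P (greater h t) = filter P t.
Proof.
by move=> Ph; rewrite -filter_predI; apply: eq_filter => x /=; case Px: (P x) => //=; apply: Ph.
Qed.

Lemma leads_lesser h t (W : pred T) y : (forall z, W z -> (z < h)%O) ->
  leads (lesser h t) W y = leads (h :: t) W y.
Proof.
move=> Wh; have Wh_out : ~~ W h by apply/negP => /Wh; rewrite ltxx.
by rewrite leads_cons_out // leads_filter // => z /Wh.
Qed.

Lemma leads_greater h t (W : pred T) y : (forall z, W z -> (h < z)%O) ->
  leads (greater h t) W y = leads (h :: t) W y.
Proof.
move=> Wh; have Wh_out : ~~ W h by apply/negP => /Wh; rewrite ltxx.
by rewrite leads_cons_out // leads_filter // => z /Wh /ltW.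
Qed.

Lemma below_cost_greater a h t : h \notin t ->
  below_cost a (greater h t) (greater h t) <=
  \sum_(h' <- t | (h' < a)%O)
     pivot_cost (fun x => (x < a)%O) (below_window a) (h :: t) (h :: t) h'.
Proof.
move=> ht; have above_h z : z \in t -> (h <= z)%O -> (h < z)%O.
  by move=> zt hz; rewrite lt_neqAle hz andbT; apply: contraNneq ht => ->.
apply: window_cost_filter => h' x h't xt hh' _ hx.
apply: leads_greater => z /andP [mz _]; apply: lt_le_trans mz.
by rewrite lt_min !above_h.
Qed.

(* A pivot above [a] sends all keys below [a] to its lesser half. *)
Lemma below_cost_lesser a h t : (a < h)%O ->
  below_cost a (lesser h t) (lesser h t) <= below_cost a (h :: t) (h :: t).
Proof.
move=> ah; rewrite [leqRHS]window_cost_cons /= ltNge (ltW ah) add0n.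
apply: window_cost_filter => h' x _ _ _ _ _.
by apply: leads_lesser => z /andP [_ za]; apply: lt_trans za ah.
Qed.

Lemma above_cost_lesser a h t :
  above_cost a (lesser h t) (lesser h t) <=
  \sum_(h' <- t | (a < h')%O)
     pivot_cost (fun x => (a < x)%O) (above_window a) (h :: t) (h :: t) h'.
Proof.
apply: window_cost_filter => h' x _ _ hh' _ hx.
apply: leads_lesser => z /andP [_ zm]; apply: le_lt_trans zm _.
by rewrite gt_max hx hh'.
Qed.

(* A pivot below [a] sends all keys above [a] to its greater half. *)
Lemma above_cost_greater a h t : (h < a)%O ->
  above_cost a (greater h t) (greater h t) <= above_cost a (h :: t) (h :: t).
Proof.
move=> ha; rewrite [leqRHS]window_cost_cons /= ltNge (ltW ha) add0n.
apply: window_cost_filter => h' x _ _ _ _ _.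
by apply: leads_greater => z /andP [az _]; apply: lt_trans ha az.
Qed.

Lemma below_cost_head a h t : (h < a)%O ->
  below_cost a (h :: t) (h :: t) = 1 + 4 * (count (fun x => (x < a)%O) t).+1 +
  \sum_(h' <- t | (h' < a)%O)
     pivot_cost (fun x => (x < a)%O) (below_window a) (h :: t) (h :: t) h'.
Proof.
move=> ha; rewrite /below_cost window_cost_cons /= ha pivot_cost_head /= ?ha //.
- by rewrite /below_window minxx lexx ha.
- by move=> x xa; rewrite /below_window ge_min lexx orbT ha.
Qed.

(* On a split-closed table containing [l], the run on the keys of [l] below [a]
   costs at most [below_cost a l l], plus two for a final empty call. *)
Lemma below_fresh_cost M1 a l f : split_closed M1 -> l \in memo_keys M1 -> uniq l ->
  a \notin l -> size l < f -> fresh_cost M1 f (lesser a l) <= below_cost a l l + 2.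
Proof.
move=> cM; have [n] := ubnP (size l); elim: n l f => // n IH [|h t] f szn kl.
  by move=> _ _ _; apply: leq_trans (fresh_cost_nil _ _) (leq_addl _ _).
rewrite cons_uniq inE negb_or => /andP [ht ut] /andP [ah at_] lf.
have [kls klg] := cM h t kl.
have IHt l' g : l' \in memo_keys M1 -> {subset l' <= t} -> uniq l' -> size t < g ->
    fresh_cost M1 g (lesser a l') <= below_cost a l' l' + 2.
  move=> kl' sub ul' tg; have sz := uniq_leq_size ul' sub.
  apply: IH; rewrite ?(leq_ltn_trans sz) //; by apply: contra at_ => /sub.
have sub_s : {subset lesser h t <= t} by move=> x; rewrite mem_filter => /andP [].
have sub_g : {subset greater h t <= t} by move=> x; rewrite mem_filter => /andP [].
case: f lf => // f lf; rewrite [lesser a _]/=; case ha: (h < a)%O; last first.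
  have ah' : (a < h)%O by rewrite lt_neqAle ah leNgt ha.
  rewrite -(filter_lesser_sub _ (fun x xa => lt_trans xa ah')).
  apply: leq_trans (IHt _ f.+1 kls sub_s (filter_uniq _ ut) (ltnW lf)) _.
  by rewrite leq_add2r below_cost_lesser.
apply: leq_trans (fresh_cost_cons _ _ _ _) _.
case: f lf => // f lf.
rewrite (filter_lesser_sub _ (fun x xh => lt_trans xh ha)) (fresh_cost_key f kls).
rewrite filter_swap.
have := IHt _ f.+1 klg sub_g (filter_uniq _ ut) lf.
have := below_cost_greater a ht.
rewrite below_cost_head // size_filter; set F := fresh_cost _ _ _; lia.
Qed.

Lemma above_cost_head a h t : (a < h)%O ->
  above_cost a (h :: t) (h :: t) = 1 + 4 * (count (fun x => (a < x)%O) t).+1 +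
  \sum_(h' <- t | (a < h')%O)
     pivot_cost (fun x => (a < x)%O) (above_window a) (h :: t) (h :: t) h'.
Proof.
move=> ah; rewrite /above_cost window_cost_cons /= ah pivot_cost_head /= ?ah //.
- by rewrite /above_window maxxx lexx ah.
- by move=> x ax; rewrite /above_window le_max lexx orbT ah.
Qed.

(* On a split-closed table containing [l], the run on the keys of [l] above [a]
   costs at most [above_cost a l l], plus two for a final empty call. *)
Lemma above_fresh_cost M1 a l f : split_closed M1 -> l \in memo_keys M1 -> uniq l ->
  a \notin l -> size l < f -> fresh_cost M1 f (greater a l) <= above_cost a l l + 2.
Proof.
move=> cM; have [n] := ubnP (size l); elim: n l f => // n IH [|h t] f szn kl.
  by move=> _ _ _; apply: leq_trans (fresh_cost_nil _ _) (leq_addl _ _).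
rewrite cons_uniq inE negb_or => /andP [ht ut] /andP [ah at_] lf.
have [kls klg] := cM h t kl.
have IHt l' g : l' \in memo_keys M1 -> {subset l' <= t} -> uniq l' -> size t < g ->
    fresh_cost M1 g (greater a l') <= above_cost a l' l' + 2.
  move=> kl' sub ul' tg; have sz := uniq_leq_size ul' sub.
  apply: IH; rewrite ?(leq_ltn_trans sz) //; by apply: contra at_ => /sub.
have sub_s : {subset lesser h t <= t} by move=> x; rewrite mem_filter => /andP [].
have sub_g : {subset greater h t <= t} by move=> x; rewrite mem_filter => /andP [].
case: f lf => // f lf; rewrite [greater a _]/=; case ah': (a <= h)%O; last first.
  have ha : (h < a)%O by rewrite ltNge ah'.
  rewrite -(filter_greater_sub _ (fun x ax => le_trans (ltW ha) ax)).
  apply: leq_trans (IHt _ f.+1 klg sub_g (filter_uniq _ ut) (ltnW lf)) _.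
  by rewrite leq_add2r above_cost_greater.
have ahs : (a < h)%O by rewrite lt_neqAle ah ah'.
apply: leq_trans (fresh_cost_cons _ _ _ _) _.
case: f lf => // f lf.
have -> : greater h (greater a t) = greater h t.
  by apply: filter_greater_sub => x; apply: le_trans.
rewrite (fresh_cost_key f klg) filter_swap.
have := IHt _ f.+1 kls sub_s (filter_uniq _ ut) lf.
have := above_cost_lesser a h t.
have strict : count (fun x => (a <= x)%O) t = count (fun x => (a < x)%O) t.
  apply: eq_in_count => x xt /=; have ax : a != x by apply: contraNneq at_ => ->.
  by rewrite lt_neqAle ax.
rewrite above_cost_head // size_filter strict; set F := fresh_cost _ _ _; lia.
Qed.

End QuicksortWindows.

Section SecondRun.
Variables (d : Order.disp_t) (T : orderType d).
Implicit Types (K L : seq T) (a : T).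

Lemma second_run_cost_le a L : uniq (a :: L) ->
  second_run_cost (a :: L) <= 4 * size L + 8 + below_cost a L L + above_cost a L L.
Proof.
rewrite cons_uniq => /andP [aL uL] /=.
have sz0 : size_preserving ([::] : memo T) by [].
have closed0 : split_closed ([::] : memo T) by [].
have := mqs_invariant (size L).+1 L sz0; have := mqs_split_closed sz0 closed0 (ltnSn (size L)).
rewrite /mqs_run; case: (mqs _ [::] L) => [[r M1] c] [cM kL] [szM _ _].
apply: leq_trans (mqs_cost_le _ _ szM (fun k kM => kM)) _.
apply: leq_trans (fresh_cost_cons _ _ _ _) _.
have := below_fresh_cost cM kL uL aL (ltnSn _).
have := above_fresh_cost cM kL uL aL (ltnSn _).
set Fb := fresh_cost _ _ (lesser a L); set Fa := fresh_cost _ _ (greater a L); lia.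
Qed.

(* The charges only involve the keys other than the first one. *)
Lemma below_cost_reindex a L K : perm_eq (a :: L) K -> below_cost a L L = below_cost a K (a :: L).
Proof.
move=> pK; rewrite /below_cost window_cost_cons_outside; last first.
  by move=> h x; rewrite /below_window ltxx andbF.
by rewrite -(window_cost_perm _ _ _ pK) window_cost_cons_index ?ltxx.
Qed.

Lemma above_cost_reindex a L K : perm_eq (a :: L) K -> above_cost a L L = above_cost a K (a :: L).
Proof.
move=> pK; rewrite /above_cost window_cost_cons_outside; last first.
  by move=> h x; rewrite /above_window ltxx.
by rewrite -(window_cost_perm _ _ _ pK) window_cost_cons_index ?ltxx.
Qed.

Lemma second_run_cost_perm K L' : uniq K -> L' \in permutations K ->
  second_run_cost L' <= 8 * size K +
    \sum_(a <- K) (ohead L' == Some a) * (below_cost a K L' + above_cost a K L').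
Proof.
case: L' => [//|a L] uK; rewrite mem_permutations => pK.
have aK : a \in K by rewrite -(perm_mem pK) mem_head.
rewrite (bigD1_seq a) //= eqxx mul1n -below_cost_reindex // -above_cost_reindex //.
have := @second_run_cost_le a L; rewrite (perm_uniq pK) -(perm_size pK) /= => /(_ uK).
set S := \sum_(_ <- _ | _) _; lia.
Qed.

(* Averaged over the orderings of [K] starting with [a], the charges are linear:
   a key below [a] either lies in the window of pivot [h] (when [h <= x]), and
   then shares it, or has the window [[x, a)] that does not depend on [h];
   symmetrically above [a]. *)
Lemma expected_charge K a : uniq K ->
  \sum_(L' <- permutations K) (ohead L' == Some a) * (below_cost a K L' + above_cost a K L')
  <= 18 * size K * starts_with K a.
Proof.
move=> uK; under eq_bigr => L' _ do rewrite mulnDr.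
rewrite big_split /=.
apply: (@leq_trans (9 * size K * starts_with K a + 9 * size K * starts_with K a)); last by lia.
apply: leq_add.
  apply: (@average_window_cost _ _ uK a _ (below_window a) (fun x y => (x <= y)%O && (y < a)%O)).
  - by move=> h; rewrite /below_window ltxx andbF.
  - by move=> h ha; rewrite /below_window minxx lexx ha.
  move=> h x xa; rewrite /below_window minxx.
  by have [hx|_] := leP h x; [left; split; rewrite ?hx | right].
apply: (@average_window_cost _ _ uK a _ (above_window a) (fun x y => (a < y)%O && (y <= x)%O)).
- by move=> h; rewrite /above_window ltxx.
- by move=> h ah; rewrite /above_window maxxx lexx ah.
move=> h x ax; rewrite /above_window maxxx.
by have [_|xh] := leP h x; [right | left; split; rewrite ?ax ?(ltW xh)].
Qed.

End SecondRun.

Theorem mainTheorem1 :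
  exists C : nat,
    forall (d : Order.disp_t) (T : orderType d) (K : seq T),
      uniq K ->
      (\sum_(L' <- permutations K) second_run_cost L'
         <= C * size K * size (permutations K))%N.
Proof.
exists 26 => d T K uK.
apply: (@leq_trans (\sum_(L' <- permutations K) (8 * size K +
    \sum_(a <- K) (ohead L' == Some a) * (below_cost a K L' + above_cost a K L')))).
  by rewrite big_seq [leqRHS]big_seq; apply: leq_sum => L'; apply: second_run_cost_perm.
rewrite big_split /= sum_nat_const_seq exchange_big /=.
have charges : \sum_(a <- K) \sum_(L' <- permutations K)
    (ohead L' == Some a) * (below_cost a K L' + above_cost a K L')
    <= 18 * size K * size (permutations K).
  apply: (@leq_trans (\sum_(a <- K) 18 * size K * starts_with K a)).
    by apply: leq_sum => a _; apply: expected_charge.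
  by rewrite -big_distrr leq_mul2l sum_starts_with ?orbT.
apply: leq_trans (leq_add (leqnn _) charges) _.
set p := size (permutations K); set n := size K; nia.
Qed.
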